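(* Let $q=p^r$ be odd and $n\ge 1$. Let: - $g\in\mathbb{F}_q[x_1,\dots,x_n]$ be a polynomial of total degree $n(q-1)/2$; - $f\in\mathbb{F}_q[y]$ be a permutation polynomial of degree $q-2$; - $a\in\mathbb{F}_q$ be a non-square. Then $$h(x_1,\dots,x_n,y)=\bigl(g(x_1,\dots,x_n)^2-a\bigr)f(y)$$ is a permutation polynomial in $\mathbb{F}_q[x_1,\dots,x_n,y]$.
   Context: $\mathbb{F}_q$ is the finite field with $q=p^r$ elements. A polynomial in $m$ variables over $\mathbb{F}_q$ is a permutation polynomial (PP) if, for every $c\in\mathbb{F}_q$, the equation $h=c$ has exactly $q^{m-1}$ solutions in $\mathbb{F}_q^m$. A univariate PP is a polynomial inducing a bijection of $\mathbb{F}_q$. *)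

From HB Require Import structures.
From mathcomp Require Import all_boot all_order all_algebra all_field.
From mathcomp Require Import mpoly.
Set Implicit Arguments. Unset Strict Implicit. Unset Printing Implicit Defensive.
Import GRing.Theory.
Local Open Scope ring_scope.

(* total degree of a multivariate polynomial (msize p = 1 + total degree, 0 for p = 0) *)
Definition mtotdeg (R : nzRingType) (n : nat) (p : {mpoly R[n]}) : nat := (msize p).-1.

Definition perm_poly (F : finFieldType) (f : {poly F}) : Prop :=
  bijective (fun x : F => f.[x]).

Definition perm_mpoly (F : finFieldType) (m : nat) (h : {mpoly F[m]}) : Prop :=
  forall c : F, #|[set v : {ffun 'I_m -> F} | meval (fun i => v i) h == c]| = (#|F| ^ (m - 1))%N.

Definition nonsquare (F : finFieldType) (a : F) : bool := ~~ [exists b : F, b ^+ 2 == a].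

(* the polynomial h(x_1..x_n,y) = (g(x)^2 - a) f(y) in F[x_1,..,x_n,y];
   variables x_i are 'X_i for i < n and y is 'X_n *)
Definition hpoly (F : finFieldType) (n : nat) (g : {mpoly F[n]}) (f : {poly F}) (a : F)
  : {mpoly F[n.+1]} :=
  let glift := g \mPo [tuple 'X_(widen_ord (leqnSn n) i) | i < n] in
  let fy := (map_poly (@mpolyC n.+1 F) f).['X_(@ord_max n)] in
  (glift ^+ 2 - a%:MP) * fy.

From HB Require Import structures.
From mathcomp Require Import all_boot all_order all_algebra all_field.
From mathcomp Require Import mpoly.
Set Implicit Arguments. Unset Strict Implicit. Unset Printing Implicit Defensive.
Import GRing.Theory.
Local Open Scope ring_scope.

(* Since [a] is a non-square, [g(x)^2 - a] never vanishes, so for every fixed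
   [x] the map [y |-> (g(x)^2 - a) f(y)] is a bijection of [F]: each value [c]
   is taken at exactly one [y] above every [x], i.e. at [q^n] points in all. *)

Section FfunInitLast.
Variables (T : finType) (n : nat).

Definition ffun_init_last (v : {ffun 'I_n.+1 -> T}) : {ffun 'I_n -> T} * T :=
  ([ffun j => v (widen_ord (leqnSn n) j)], v ord_max).

Definition ffun_rcons (p : {ffun 'I_n -> T} * T) : {ffun 'I_n.+1 -> T} :=
  [ffun i => if unlift ord_max i is Some j then p.1 j else p.2].

Lemma lift_max_widen (j : 'I_n) : lift ord_max j = widen_ord (leqnSn n) j.
Proof. by apply: val_inj; rewrite /= /bump leqNgt ltn_ord. Qed.

Lemma ffun_init_lastK : cancel ffun_init_last ffun_rcons.
Proof.
move=> v; apply/ffunP => i; rewrite ffunE.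
by case: unliftP => [j ->|->]; rewrite ?ffunE ?lift_max_widen.
Qed.

Lemma ffun_rconsK : cancel ffun_rcons ffun_init_last.
Proof.
case=> x y; congr (_, _); last by rewrite ffunE unlift_none.
by apply/ffunP => j; rewrite !ffunE -lift_max_widen liftK.
Qed.

Lemma card_ffun_init_last (P : pred ({ffun 'I_n -> T} * T)) :
  #|[set v | P (ffun_init_last v)]| = #|[set p | P p]|.
Proof.
have -> : [set v | P (ffun_init_last v)] = ffun_rcons @: [set p | P p].
  by rewrite (can2_imset_pre _ ffun_rconsK ffun_init_lastK); apply/setP => v; rewrite !inE.
exact/card_imset/(can_inj ffun_rconsK).
Qed.

End FfunInitLast.

Lemma card_mul_bij_fiber (F : finFieldType) (X : finType) (u : X -> F) (phi : F -> F) (c : F) :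
  (forall x, u x != 0) -> bijective phi ->
  #|[set p : X * F | u p.1 * phi p.2 == c]| = #|X|.
Proof.
move=> u_neq0 [psi phiK psiK].
have -> : [set p : X * F | u p.1 * phi p.2 == c] = [set (x, psi (c / u x)) | x : X].
  apply/setP => -[x y]; rewrite inE; apply/eqP/imsetP => [<- | [x' _ [-> ->]]].
    by exists x; rewrite // mulrC mulKf // phiK.
  by rewrite psiK mulrC divfK.
by rewrite card_imset // => x x' [].
Qed.

Lemma nonsquare_subr_sqr_neq0 (F : finFieldType) (a b : F) :
  nonsquare a -> b ^+ 2 - a != 0.
Proof.
move=> /negP nsq; rewrite subr_eq0; apply/negP => sq_b.
by apply: nsq; apply/existsP; exists b.
Qed.

Lemma meval_hpoly (F : finFieldType) (n : nat) (g : {mpoly F[n]}) (f : {poly F}) (a : F)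
  (v : 'I_n.+1 -> F) :
  meval v (hpoly g f a) =
  ((meval (fun j => v (widen_ord (leqnSn n) j)) g) ^+ 2 - a) * f.[v ord_max].
Proof.
rewrite /hpoly mevalM mevalB mevalC rmorphXn /= comp_mpoly_meval.
congr ((_ ^+ 2 - _) * _).
  by apply: meval_eq => j; rewrite tnth_mktuple mevalXU.
rewrite -horner_map /= mevalXU -map_poly_comp.
by rewrite (eq_map_poly (mevalC v)) map_poly_id.
Qed.

Theorem mainTheorem6 (F : finFieldType) (n : nat) (g : {mpoly F[n]}) (f : {poly F}) (a : F) :
  odd #|F| -> (1 <= n)%N ->
  mtotdeg g = (n * (#|F| - 1))./2 ->
  perm_poly f -> size f = (#|F| - 2).+1 ->
  nonsquare a ->
  perm_mpoly (hpoly g f a).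
Proof.
move=> _ _ _ f_bij _ nsq c.
pose u (x : {ffun 'I_n -> F}) := meval (fun i => x i) g ^+ 2 - a.
pose fiber_c (p : {ffun 'I_n -> F} * F) := u p.1 * f.[p.2] == c.
have -> : [set v : {ffun 'I_n.+1 -> F} | meval (fun i => v i) (hpoly g f a) == c]
    = [set v | fiber_c (ffun_init_last v)].
  apply/setP => v; rewrite !inE meval_hpoly /fiber_c /u /ffun_init_last /=.
  by congr ((_ ^+ 2 - _) * _ == _); apply: meval_eq => j; rewrite ffunE.
rewrite card_ffun_init_last card_mul_bij_fiber //.
  by rewrite card_ffun card_ord subSS subn0.
by move=> x; apply: nonsquare_subr_sqr_neq0.
Qed.
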